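(* Let $1\le\gamma\le2$. Let $\tilde\Phi:\mathbb{R}^N\to\mathbb{R}$ with $\nabla\tilde\Phi\in\Delta_N$, and suppose the full-information GBPA with potential $\tilde\Phi$ is DiffStable($D_{\infty,\gamma}$, $\|\cdot\|_\infty$) at level $\epsilon$, i.e. $D_{\infty,\gamma}(\nabla\tilde\Phi(\sum_{s<t}\ell'_s),\nabla\tilde\Phi(\sum_{s\le t}\ell'_s))\le\epsilon\|\ell'_t\|_\infty$ for all $t$ and all nonnegative loss vectors $\ell'_1,\dots,\ell'_t\in[0,\infty)^N$. In the $N$-armed bandit GBPA with losses $\ell_t\in[0,1]^N$, where $p_t=\nabla\tilde\Phi(\hat L_{t-1})$, $i_t\sim p_t$, $\hat\ell_t=\frac{\ell_{t,i_t}}{p_{t,i_t}}\mathbf{e}_{i_t}$, $\hat L_t=\hat L_{t-1}+\hat\ell_t$ (with $\hat L_0=0$) and $p_{t+1}=\nabla\tilde\Phi(\hat L_t)$, we have for every $t$ \[\langle p_t-p_{t+1},\hat\ell_t\rangle\le\epsilon\,\hat\ell_{t,i_t}^2\,p_{t,i_t}^\gamma.\]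
   Context: $\Delta_N$ is the probability simplex. The Tsallis $\gamma$-logarithm is $\log_\gamma(x)=\log x$ if $\gamma=1$ and $\frac{x^{1-\gamma}-1}{1-\gamma}$ otherwise; for distributions $P,Q$ on $[N]$, $D_{\infty,\gamma}(P,Q)=\sup_{B\subseteq[N]}\log_\gamma P(B)-\log_\gamma Q(B)$. *)

From HB Require Import structures.
From mathcomp Require Import all_boot all_order all_algebra.
From mathcomp Require Import all_classical all_reals all_analysis.
Set Implicit Arguments. Unset Strict Implicit. Unset Printing Implicit Defensive.
Import Order.TTheory GRing.Theory Num.Theory.
Import numFieldNormedType.Exports.
Local Open Scope ring_scope.

Section Defs.
Variables (R : realType) (N : nat).

Definition in_simplex (p : 'rV[R]_N) : Prop :=
  (forall i, 0 <= p ord0 i) /\ \sum_i p ord0 i = 1.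

Definition linf (v : 'rV[R]_N) : R := \big[Num.max/0]_i `|v ord0 i|.

Definition logg (gamma x : R) : \bar R :=
  if x <= 0 then -oo%E
  else if gamma == 1 then (ln x)%:E
  else ((x `^ (1 - gamma) - 1) / (1 - gamma))%:E.

Definition prob (P : 'rV[R]_N) (B : {set 'I_N}) : R := \sum_(i in B) P ord0 i.

Definition Dinf (gamma : R) (P Q : 'rV[R]_N) : \bar R :=
  \big[Order.max/-oo%E]_(B : {set 'I_N}) (logg gamma (prob P B) - logg gamma (prob Q B))%E.

Definition evec (i : 'I_N) : 'rV[R]_N := delta_mx ord0 i.

(* Bandit GBPA: G = grad Phi, ell t = loss vector at round t (t >= 1),
   arm t = chosen arm i_t.  Lhat t = cumulative estimated loss after t rounds. *)
Fixpoint Lhat (G : 'rV[R]_N -> 'rV[R]_N) (ell : nat -> 'rV[R]_N)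
  (arm : nat -> 'I_N) (t : nat) : 'rV[R]_N :=
  match t with
  | 0 => 0
  | s.+1 => Lhat G ell arm s +
            (ell s.+1 ord0 (arm s.+1) / G (Lhat G ell arm s) ord0 (arm s.+1))
              *: evec (arm s.+1)
  end.

Definition lhat (G : 'rV[R]_N -> 'rV[R]_N) (ell : nat -> 'rV[R]_N) (arm : nat -> 'I_N) (t : nat) : 'rV[R]_N :=
  (ell t ord0 (arm t) / G (Lhat G ell arm t.-1) ord0 (arm t)) *: evec (arm t).

End Defs.

From HB Require Import structures.
From mathcomp Require Import all_boot all_order all_algebra.
From mathcomp Require Import all_classical all_reals all_analysis.
From mathcomp Require Import lra ring.
Import Order.TTheory GRing.Theory Num.Theory.
Import numFieldNormedType.Exports.
Set Implicit Arguments. Unset Strict Implicit.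
Local Open Scope ring_scope.

(** The estimated loss of round [t] is [c e_i] with [i] the chosen arm, so the
  left-hand side is [(p_i - p'_i) c] and [||c e_i||_oo = c].  Stability applied
  to the nonnegative sequence of estimated losses, tested on the event [{i}],
  gives [log_g p_i - log_g p'_i <= eps c].  Since [log_g] is concave with
  derivative [x^-g], its tangent at [p_i] lies above it:
  [p_i - p'_i <= p_i^g (log_g p_i - log_g p'_i) <= p_i^g eps c];
  multiplying by [c] concludes. *)

Section TsallisLog.
Variable R : realType.

Definition tlog (gamma x : R) : R :=
  if gamma == 1 then ln x else (x `^ (1 - gamma) - 1) / (1 - gamma).

Lemma logg_gt0 (gamma x : R) : 0 < x -> logg gamma x = (tlog gamma x)%:E.
Proof. by move=> x_gt0; rewrite /logg /tlog leNgt x_gt0 /=; case: ifP. Qed.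

Lemma ln_le_subr1 (x : R) : 0 < x -> ln x <= x - 1.
Proof.
by move=> x_gt0; have := @le_ln1Dx R (x - 1); rewrite addrCA subrr addr0; apply; lra.
Qed.

Lemma powR_ge1Dsubr1 (a x : R) : a <= 0 -> 0 < x -> 1 + a * (x - 1) <= x `^ a.
Proof.
move=> a_le0 x_gt0; rewrite /powR gt_eqF //; apply: le_trans (expR_ge1Dx _).
by rewrite lerD2l; apply: ler_wnM2l => //; exact: ln_le_subr1.
Qed.

Lemma tlog_tangent_le (gamma p q : R) : 1 <= gamma -> 0 < p -> 0 < q ->
  p - q <= p `^ gamma * (tlog gamma p - tlog gamma q).
Proof.
move=> gamma_ge1 p_gt0 q_gt0; set x := q / p.
have x_gt0 : 0 < x by rewrite divr_gt0.
have -> : q = x * p by rewrite /x mulrVK // unitfE gt_eqF.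
have -> : p - x * p = p * (1 - x) by rewrite mulrBr mulr1 mulrC.
rewrite /tlog; case: ifPn => [/eqP-> | gamma_neq1].
  rewrite (powRr1 (ltW p_gt0)) lnM ?posrE // ler_pM2l //.
  by have := ln_le_subr1 x_gt0; lra.
set a := 1 - gamma.
have a_lt0 : a < 0 by rewrite /a subr_lt0 lt_neqAle eq_sym gamma_neq1.
have pa_gamma : p `^ gamma * p `^ a = p.
  by rewrite -powRD ?(gt_eqF p_gt0) ?implybT // /a addrCA subrr addr0 powRr1 // ltW.
rewrite (powRM _ (ltW x_gt0) (ltW p_gt0)).
have -> : (p `^ a - 1) / a - (x `^ a * p `^ a - 1) / a = p `^ a * ((1 - x `^ a) / a).
  by field; rewrite lt_eqF.
rewrite mulrA pa_gamma ler_pM2l // ler_ndivlMr //.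
by have := powR_ge1Dsubr1 (ltW a_lt0) x_gt0; lra.
Qed.

Lemma logg_subr_le (gamma p q d : R) : 1 <= gamma -> 0 < p ->
  (logg gamma p - logg gamma q <= d%:E)%E -> p - q <= p `^ gamma * d.
Proof.
move=> gamma_ge1 p_gt0; have [q_le0|q_gt0] := leP q 0.
  by rewrite (logg_gt0 _ p_gt0) /logg q_le0.
rewrite !logg_gt0 // -EFinB lee_fin => gap.
apply: le_trans (tlog_tangent_le gamma_ge1 p_gt0 q_gt0) _.
by apply: ler_wpM2l; rewrite ?powR_ge0.
Qed.

End TsallisLog.

Section Bandit.
Variables (R : realType) (N : nat).

Lemma le_Dinf (gamma : R) (P Q : 'rV[R]_N) B :
  (logg gamma (prob P B) - logg gamma (prob Q B) <= Dinf gamma P Q)%E.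
Proof. exact: (le_bigmax _ (fun B => logg gamma (prob P B) - logg gamma (prob Q B))%E). Qed.

Lemma prob_set1 (P : 'rV[R]_N) i : prob P [set i] = P ord0 i.
Proof. by rewrite /prob big_set1. Qed.

Lemma linf_scale_evec (c : R) (i : 'I_N) : 0 <= c -> linf (c *: evec R i) = c.
Proof.
move=> c_ge0; apply/eqP; rewrite eq_le; apply/andP; split.
  apply: bigmax_le => // j _; rewrite !mxE eqxx /=.
  by case: (j == i); rewrite ?mulr1 ?mulr0 ?normr0 // ger0_norm.
have := le_bigmax 0 (fun j => `|(c *: evec R i) ord0 j|) i.
by rewrite /= !mxE !eqxx /= mulr1 ger0_norm.
Qed.

Lemma sum_mul_scale_evec (f : 'I_N -> R) c i :
  \sum_j f j * (c *: evec R i) ord0 j = f i * c.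
Proof.
rewrite (bigD1 i) //= big1 => [|j /negbTE ji]; last by rewrite !mxE ji mulr0 mulr0.
by rewrite addr0 !mxE !eqxx mulr1.
Qed.

Lemma lhat_ge0 G (ell : nat -> 'rV[R]_N) arm s j :
  0 <= ell s ord0 (arm s) -> 0 < G (Lhat G ell arm s.-1) ord0 (arm s) ->
  0 <= lhat G ell arm s ord0 j.
Proof.
move=> ell_ge0 p_gt0; rewrite !mxE mulr_natr mulrn_wge0 //.
exact: divr_ge0 ell_ge0 (ltW p_gt0).
Qed.

Lemma sum_lhat G ell arm n :
  \sum_(1 <= s < n.+1) lhat G ell arm s = Lhat G ell arm n :> 'rV[R]_N.
Proof. by elim: n => [|n IH]; [rewrite big_geq | rewrite big_nat_recr //= IH]. Qed.

End Bandit.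

Unset Implicit Arguments. Set Strict Implicit.
Theorem lemma7 (R : realType) (N : nat) (gamma eps : R)
  (Phi : 'rV[R]_N -> R) (G : 'rV[R]_N -> 'rV[R]_N) :
  1 <= gamma <= 2 ->
  (* G is the gradient of Phi, with values in the simplex *)
  (forall x, differentiable Phi x) ->
  (forall x (i : 'I_N), 'D_(@evec R N i) Phi x = G x ord0 i) ->
  (forall x, in_simplex (G x)) ->
  (* DiffStable(D_{infty,gamma}, ||.||_infty) at level eps *)
  (forall (t : nat) (lp : nat -> 'rV[R]_N), (0 < t)%N ->
     (forall s i, (1 <= s <= t)%N -> 0 <= lp s ord0 i) ->
     (Dinf gamma (G (\sum_(1 <= s < t) lp s)%R) (G (\sum_(1 <= s < t.+1) lp s)%R)
        <= (eps * linf (lp t))%:E)%E) ->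
  forall (ell : nat -> 'rV[R]_N) (arm : nat -> 'I_N) (t : nat),
    (forall s i, 0 <= ell s ord0 i <= 1) ->
    (* each arm i_s is drawn from p_s, hence lies in its support *)
    (forall s, (1 <= s <= t)%N -> 0 < G (Lhat G ell arm s.-1) ord0 (arm s)) ->
    (0 < t)%N ->
    let p := G (Lhat G ell arm t.-1) in
    let p' := G (Lhat G ell arm t) in
    let lh := lhat G ell arm t in
    \sum_i (p ord0 i - p' ord0 i) * lh ord0 i
      <= eps * (lh ord0 (arm t)) ^+ 2 * (p ord0 (arm t)) `^ gamma.
Proof.
move=> /andP[gamma_ge1 _] _ _ _ stable ell arm t ell01 arm_supp.
case: t arm_supp => // t arm_supp _; cbv zeta.
set p := G (Lhat G ell arm t.+1.-1); set p' := G (Lhat G ell arm t.+1).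
set lh := lhat G ell arm t.+1.
have lh_ge0 s j : (1 <= s <= t.+1)%N -> 0 <= lhat G ell arm s ord0 j.
  by move=> /arm_supp; apply: lhat_ge0; case/andP: (ell01 s (arm s)).
set i := arm t.+1; set c := ell t.+1 ord0 i / p ord0 i.
have p_gt0 : 0 < p ord0 i by apply: arm_supp; rewrite /= leqnn.
have c_ge0 : 0 <= c by rewrite divr_ge0 ?(ltW p_gt0) //; case/andP: (ell01 t.+1 i).
have lhE : lh = c *: evec R i by [].
have stable_t : (Dinf gamma p p' <= (eps * c)%:E)%E.
  by have := stable t.+1 _ isT lh_ge0; rewrite !sum_lhat linf_scale_evec.
have gap := le_trans (le_Dinf gamma p p' [set i]) stable_t.
rewrite !prob_set1 in gap.
have tangent := logg_subr_le gamma_ge1 p_gt0 gap.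
rewrite lhE sum_mul_scale_evec !mxE !eqxx mulr1.
have -> : eps * c ^+ 2 * p ord0 i `^ gamma = p ord0 i `^ gamma * (eps * c) * c.
  by rewrite expr2; ring.
exact: ler_wpM2r c_ge0 _ _ tangent.
Qed.
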